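(* Let $n\ge 2$. For every $T\in\mathrm{C}$ we have $\hat{\tilde T}T\in\mathrm{C}^{\overline{03}}$. Consequently, $$\mathrm{B}=\begin{cases}\{T\in\mathrm{C}^\times:\ \hat{\tilde T} T\in(\mathrm{C}^0)^\times\}, & n\equiv 0,1,2 \pmod 4,\\ \{T\in\mathrm{C}^\times:\ \hat{\tilde T} T\in(\mathrm{C}^0\oplus\mathrm{C}^n)^\times\}, & n\equiv 3\pmod 4.\end{cases}$$ In particular, $\mathrm{B}=\mathrm{C}^\times$ for $n\le 3$.
   Context: Let $\mathrm{C}$ be either the real Clifford algebra $C\ell_{p,q}$ with $p+q=n$, or the complex Clifford algebra $C\ell(\mathbb{C}^n)$. It has identity $e$ and generators $e_1,\dots,e_n$ satisfying $e_ae_b+e_be_a=2\eta_{ab}e$. In the real case $\eta=\mathrm{diag}(1,\dots,1,-1,\dots,-1)$ with $p$ entries $+1$ and $q$ entries $-1$. In the complex case $\eta=I_n$. $\mathrm{C}^k$ is the grade-$k$ subspace, spanned by the products $e_{a_1}\cdots e_{a_k}$ with $a_1<\dots<a_k$. The grade involution $U\mapsto\hat U$ is the linear automorphism acting on $\mathrm{C}^k$ as $(-1)^k$. The reversion $U\mapsto\tilde U$ is the linear anti-automorphism acting on $\mathrm{C}^k$ as $(-1)^{k(k-1)/2}$. $\hat{\tilde T}$ denotes the grade involution of $\tilde T$. For $m=0,1,2,3$ let $\mathrm{C}^{\overline m}=\bigoplus_{k\equiv m \pmod 4}\mathrm{C}^k$, and $\mathrm{C}^{\overline{kl}}=\mathrm{C}^{\overline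 k}\oplus\mathrm{C}^{\overline l}$. For $S\subseteq\mathrm{C}$, $S^\times$ is the set of elements of $S$ invertible in $\mathrm{C}$. $\mathrm{Z}$ is the center: $\mathrm{Z}=\mathrm{C}^0$ for $n$ even and $\mathrm{Z}=\mathrm{C}^0\oplus\mathrm{C}^n$ for $n$ odd. Define $\mathrm{B}:=\{T\in\mathrm{C}^\times:\ \hat{\tilde T} T\in\mathrm{Z}^\times\}$. *)

(* Clifford algebras with a diagonal metric, modelled
   concretely: a multivector is a finite function from subsets A of 'I_n
   (the basis blade e_A = e_{a_1}...e_{a_k}, a_1<...<a_k) to scalars. *)
From HB Require Import structures.
From mathcomp Require Import all_boot all_order all_algebra.
From mathcomp Require Import reals complex.
Set Implicit Arguments. Unset Strict Implicit. Unset Printing Implicit Defensive.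
Import Order.TTheory GRing.Theory Num.Theory.
Local Open Scope ring_scope.

Section Clifford.
Variables (F : fieldType) (n : nat) (eta : 'I_n -> F).

Definition mv := {ffun {set 'I_n} -> F}.

Definition symdiff (A B : {set 'I_n}) : {set 'I_n} := (A :\: B) :|: (B :\: A).

(* e_A e_B = (-1)^#{(a,b) in A x B | b < a} (prod_{i in A cap B} eta_i) e_{A symdiff B} *)
Definition blade_coef (A B : {set 'I_n}) : F :=
  (-1) ^+ #|[set ab : 'I_n * 'I_n | [&& ab.1 \in A, ab.2 \in B & (ab.2 < ab.1)%N]]|
  * \prod_(i in A :&: B) eta i.

Definition cl_mul (x y : mv) : mv :=
  [ffun C : {set 'I_n} => \sum_(A : {set 'I_n}) \sum_(B : {set 'I_n} | symdiff A B == C)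
              x A * y B * blade_coef A B].

Definition cl_one : mv := [ffun A : {set 'I_n} => (A == set0)%:R].

Definition cl_unit (x : mv) : Prop :=
  exists y : mv, cl_mul x y = cl_one /\ cl_mul y x = cl_one.

Definition cl_ginv (x : mv) : mv := [ffun A : {set 'I_n} => (-1) ^+ #|A| * x A].
Definition cl_rev (x : mv) : mv := [ffun A : {set 'I_n} => (-1) ^+ 'C(#|A|, 2) * x A].

Definition in_grades (P : pred nat) (x : mv) : Prop :=
  forall A : {set 'I_n}, x A != 0 -> P #|A|.

Definition in_center (x : mv) : Prop := forall y : mv, cl_mul x y = cl_mul y x.

Definition in_B (T : mv) : Prop :=
  cl_unit T /\ in_center (cl_mul (cl_ginv (cl_rev T)) T)
            /\ cl_unit (cl_mul (cl_ginv (cl_rev T)) T).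

Definition clifford_conclusions : Prop :=
  (forall T : mv, in_grades (fun k => (k %% 4 == 0)%N || (k %% 4 == 3)%N)
                            (cl_mul (cl_ginv (cl_rev T)) T))
  /\ ((n %% 4 != 3)%N -> forall T : mv,
        in_B T <-> (cl_unit T /\ in_grades (fun k => k == 0%N) (cl_mul (cl_ginv (cl_rev T)) T)
                              /\ cl_unit (cl_mul (cl_ginv (cl_rev T)) T)))
  /\ ((n %% 4 == 3)%N -> forall T : mv,
        in_B T <-> (cl_unit T /\ in_grades (fun k => (k == 0%N) || (k == n)) (cl_mul (cl_ginv (cl_rev T)) T)
                              /\ cl_unit (cl_mul (cl_ginv (cl_rev T)) T)))
  /\ ((n <= 3)%N -> forall T : mv, in_B T <-> cl_unit T).

End Clifford.

Definition real_sig (R : realType) (n p : nat) : 'I_n -> R :=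
  fun i => if (i < p)%N then 1 else -1.

From HB Require Import structures.
From mathcomp Require Import all_boot all_order all_algebra.
From mathcomp Require Import reals complex.
From mathcomp Require Import zify ring.
Set Implicit Arguments. Unset Strict Implicit. Unset Printing Implicit Defensive.
Import Order.TTheory GRing.Theory Num.Theory.
Local Open Scope ring_scope.

(* Write X := \hat{\tilde T} T and bar x := \hat{\tilde x}.
   On the blade e_A the map bar acts by the sign csg k = (-1)^(k + C(k,2)),
   k = #|A|, and this sign is +1 exactly when k = 0, 3 (mod 4).
   (1) The blade coefficients of e_A e_B form a 2-cocycle, which makes the
       product associative; together with the commutation rule
       e_B e_A = (-1)^(#A #B + #(A cap B)) e_A e_B this shows that bar is an
       involutive anti-automorphism.  Hence bar X = bar T bar (bar T) = X, so
       over a field with 2 <> 0 every component of X has grade 0 or 3 mod 4,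
       and X is a unit whenever T is.
   (2) If the metric is nondegenerate, an element is central iff it is
       supported on e_0 together with e_{1..n} when n is odd.
   For X of grades 0, 3 mod 4 the two facts together say: X is central iff it
   is supported in grade 0 and, when n = 3 mod 4, in grade n. *)

Lemma bin2D m k : 'C(m + k, 2) = ('C(m, 2) + 'C(k, 2) + m * k)%N.
Proof.
elim: k => [|k IH]; first by rewrite bin0n !addn0 muln0 addn0.
rewrite addnS binS IH bin1 binS bin1 mulnS; lia.
Qed.

Lemma even_bar_sign k :
  ~~ odd (k + 'C(k, 2)) = ((k %% 4 == 0)%N || (k %% 4 == 3)%N).
Proof.
elim/ltn_ind: k => k IH.
case: k IH => [|[|[|[|m]]]] IH //.
rewrite -addn4 bin2D modnDr -IH; last by lia.
by rewrite !oddD oddM /= andbF; case: odd; case: odd.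
Qed.

Section CliffordAlgebra.
Variables (F : fieldType) (n : nat) (eta : 'I_n -> F).
Local Notation mv := (mv F n).
Local Notation coef := (@blade_coef F n eta).
Local Notation mul := (@cl_mul F n eta).
Local Notation one := (@cl_one F n).

Lemma in_symdiff (A B : {set 'I_n}) x :
  (x \in symdiff A B) = (x \in A) (+) (x \in B).
Proof. by rewrite !inE; case: (x \in A); case: (x \in B). Qed.

Lemma symdiffC (A B : {set 'I_n}) : symdiff A B = symdiff B A.
Proof. by apply/setP => x; rewrite !in_symdiff addbC. Qed.

Lemma symdiffK (A B : {set 'I_n}) : symdiff A (symdiff A B) = B.
Proof. by apply/setP => x; rewrite !in_symdiff addKb. Qed.

Lemma symdiffKr (A B : {set 'I_n}) : symdiff (symdiff A B) B = A.
Proof. by apply/setP => x; rewrite !in_symdiff addbK. Qed.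

Lemma symdiff0 (A : {set 'I_n}) : symdiff set0 A = A.
Proof. by apply/setP => x; rewrite !in_symdiff inE. Qed.

Lemma symdiffv (A : {set 'I_n}) : symdiff A A = set0.
Proof. by apply/setP => x; rewrite !in_symdiff inE addbb. Qed.

Lemma symdiffr_inj (C : {set 'I_n}) : injective (fun A : {set 'I_n} => symdiff A C).
Proof. by move=> A1 A2 /= h; rewrite -(symdiffKr A1 C) h symdiffKr. Qed.

Lemma card_symdiff (A B : {set 'I_n}) :
  #|symdiff A B| = (#|A :\: B| + #|B :\: A|)%N.
Proof.
rewrite cardsU (_ : (A :\: B) :&: (B :\: A) = set0) ?cards0 ?subn0 //.
by apply/setP => x; rewrite !inE; case: (x \in A); case: (x \in B).
Qed.

Lemma mulE (x y : mv) C :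
  mul x y C = \sum_A x A * y (symdiff A C) * coef A (symdiff A C).
Proof.
rewrite ffunE; apply: eq_bigr => A _.
rewrite (big_pred1 (symdiff A C)) // => B /=.
by apply/eqP/eqP => [<-|->]; rewrite symdiffK.
Qed.

(* Blade coefficients as products of pointwise factors, so that identities
   between them reduce to boolean identities checked point by point. *)

Lemma sign_card (T : finType) (P : {set T}) :
  (-1) ^+ #|P| = \prod_(t : T) (-1) ^+ (t \in P) :> F.
Proof.
rewrite -prodr_const big_mkcond /=; apply: eq_bigr => t _.
by case: (t \in P).
Qed.

Lemma prod_exp_split (I : finType) (f : I -> F) (a b : I -> nat) :
  \prod_i f i ^+ a i * \prod_i f i ^+ b i = \prod_i f i ^+ (a i + b i).
Proof. by rewrite -big_split; apply: eq_bigr => i _; rewrite exprD. Qed.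

Definition blade_sign (A B : {set 'I_n}) : F :=
  \prod_(p : 'I_n * 'I_n) (-1) ^+ [&& p.1 \in A, p.2 \in B & (p.2 < p.1)%N].

Definition blade_metric (A B : {set 'I_n}) : F :=
  \prod_(i : 'I_n) eta i ^+ ((i \in A) && (i \in B)).

Lemma coefE (A B : {set 'I_n}) : coef A B = blade_sign A B * blade_metric A B.
Proof.
rewrite /blade_coef sign_card; congr (_ * _).
  by apply: eq_bigr => p _; rewrite ?inE.
rewrite big_mkcond /=; apply: eq_bigr => i _.
by rewrite inE; case: (_ && _).
Qed.

Lemma coef0l (B : {set 'I_n}) : coef set0 B = 1.
Proof. by rewrite coefE /blade_sign /blade_metric !big1 ?mulr1 // => ? _; rewrite inE. Qed.

Lemma coef0r (B : {set 'I_n}) : coef B set0 = 1.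
Proof.
by rewrite coefE /blade_sign /blade_metric !big1 ?mulr1 // => ? _; rewrite inE ?andbF.
Qed.

(* The blade coefficients form a 2-cocycle: this is associativity on blades. *)
Lemma coef_cocycle (A B C : {set 'I_n}) :
  coef A B * coef (symdiff A B) C = coef A (symdiff B C) * coef B C.
Proof.
rewrite !coefE mulrACA [RHS]mulrACA; congr (_ * _).
  rewrite /blade_sign !prod_exp_split; apply: eq_bigr => p _.
  rewrite -[LHS]signr_odd -[RHS]signr_odd !oddD !oddb !in_symdiff.
  by case: (p.1 \in A); case: (p.1 \in B); case: (p.2 \in B); case: (p.2 \in C);
     case: (p.2 < p.1)%N.
rewrite /blade_metric !prod_exp_split; apply: eq_bigr => i _.
by rewrite !in_symdiff; case: (i \in A); case: (i \in B); case: (i \in C).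
Qed.

Lemma coef_swap (A B : {set 'I_n}) :
  coef B A = (-1) ^+ (#|A| * #|B| + #|A :&: B|) * coef A B.
Proof.
rewrite !coefE mulrA; congr (_ * _); last first.
  by apply: eq_bigr => i _; rewrite andbC.
have cardAB : (-1) ^+ (#|A| * #|B|) =
    \prod_(p : 'I_n * 'I_n) (-1) ^+ ((p.1 \in A) && (p.2 \in B)) :> F.
  by rewrite -cardsX sign_card; apply: eq_bigr => p _; rewrite !inE.
have cardAiB : (-1) ^+ #|A :&: B| =
    \prod_(p : 'I_n * 'I_n) (-1) ^+ [&& p.1 \in A, p.2 \in B & p.1 == p.2] :> F.
  rewrite sign_card -(pair_bigA _ (fun i j => (-1) ^+ [&& i \in A, j \in B & i == j])).
  apply: eq_bigr => i _; rewrite (bigD1 i) //= big1 ?mulr1; first by rewrite eqxx andbT inE.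
  by move=> j; rewrite eq_sym => /negbTE ->; rewrite !andbF.
rewrite exprD cardAB cardAiB /blade_sign.
rewrite (reindex_inj (h := fun p : 'I_n * 'I_n => (p.2, p.1))); last first.
  by move=> [a b] [c d] /= [-> ->].
rewrite !prod_exp_split; apply: eq_bigr => [[i j]] _ /=.
rewrite -[LHS]signr_odd -[RHS]signr_odd !oddD !oddb -(inj_eq val_inj) /=.
by case: (i \in A); case: (j \in B) => //=; case: ltngtP.
Qed.

Lemma mul1x (x : mv) : mul one x = x.
Proof.
apply/ffunP => C; rewrite mulE (bigD1 set0) //= big1 ?addr0.
  by rewrite ffunE eqxx symdiff0 coef0l mul1r mulr1.
by move=> A /negbTE hA; rewrite ffunE hA !mul0r.
Qed.

Lemma mulx1 (x : mv) : mul x one = x.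
Proof.
apply/ffunP => C; rewrite mulE (bigD1 C) //= big1 ?addr0.
  by rewrite ffunE symdiffv eqxx coef0r !mulr1.
move=> A hA; rewrite ffunE (_ : (symdiff A C == set0) = false) ?mulr0 ?mul0r //.
apply/negbTE; apply: contra hA => /eqP h.
by rewrite -(symdiffKr A C) h symdiff0.
Qed.

Lemma mulA (x y z : mv) : mul (mul x y) z = mul x (mul y z).
Proof.
apply/ffunP => D; rewrite !mulE.
under eq_bigr do rewrite mulE !mulr_suml.
rewrite exchange_big /=; apply: eq_bigr => A _.
rewrite mulE mulr_sumr mulr_suml.
rewrite (reindex_inj (h := symdiff A)); last first.
  by move=> B1 B2 /= h; rewrite -(symdiffK A B1) h symdiffK.
apply: eq_bigr => B _ /=; rewrite symdiffK.
set C := symdiff (symdiff A B) D.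
have eBC : symdiff B (symdiff A D) = C.
  by apply/setP => t; rewrite !in_symdiff; case: (t \in A); case: (t \in B); case: (t \in D).
have eAD : symdiff A D = symdiff B C by rewrite -eBC symdiffK.
rewrite eBC eAD.
transitivity (x A * y B * z C * (coef A B * coef (symdiff A B) C)); first by ring.
by rewrite coef_cocycle; ring.
Qed.

Definition bar_sign (k : nat) : F := (-1) ^+ (k + 'C(k, 2)).
Definition bar (x : mv) : mv := cl_ginv (cl_rev x).

Lemma barE x A : bar x A = bar_sign #|A| * x A.
Proof. by rewrite !ffunE mulrA -exprD. Qed.

Lemma bar_sign_symdiff (A B : {set 'I_n}) :
  bar_sign #|symdiff A B| =
    bar_sign #|A| * bar_sign #|B| * (-1) ^+ (#|A| * #|B| + #|A :&: B|).
Proof.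
rewrite /bar_sign card_symdiff -(cardsID B A) -(cardsID A B) (setIC B A).
set a := #|A :\: B|; set b := #|B :\: A|; set i := #|A :&: B|.
rewrite -!exprD -[LHS]signr_odd -[RHS]signr_odd; congr (_ ^+ _).
rewrite !bin2D !oddD !oddM !oddD.
by case: (odd a); case: (odd b); case: (odd i);
   case: (odd 'C(a,2)); case: (odd 'C(b,2)); case: (odd 'C(i,2)).
Qed.

Lemma bar_mul (x y : mv) : bar (mul x y) = mul (bar y) (bar x).
Proof.
apply/ffunP => C; rewrite barE !mulE mulr_sumr.
rewrite [RHS](reindex_inj (@symdiffr_inj C)).
apply: eq_bigr => A _ /=; rewrite symdiffKr !barE (coef_swap A (symdiff A C)).
have -> : bar_sign #|C| = bar_sign #|symdiff A (symdiff A C)| by rewrite symdiffK.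
rewrite bar_sign_symdiff; ring.
Qed.

Lemma barK (x : mv) : bar (bar x) = x.
Proof. by apply/ffunP => A; rewrite !barE mulrA /bar_sign -exprD -signr_odd oddD addbb mul1r. Qed.

Lemma bar1 : bar one = one.
Proof.
apply/ffunP => A; rewrite barE ffunE.
by case: eqP => [->|_]; rewrite ?cards0 /bar_sign ?mul1r ?mulr0.
Qed.

Lemma bar_normE (T : mv) : bar (mul (bar T) T) = mul (bar T) T.
Proof. by rewrite bar_mul barK. Qed.

Lemma unit_norm (T : mv) : cl_unit eta T -> cl_unit eta (mul (bar T) T).
Proof.
move=> [U [TU UT]]; exists (mul U (bar U)); split.
  by rewrite mulA -(mulA T) TU mul1x -bar_mul UT bar1.
by rewrite mulA -(mulA (bar U)) -bar_mul TU bar1 mul1x UT.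
Qed.

Section CharNot2.
Hypothesis two_neq0 : (2%:R : F) != 0.

Lemma eq_oppr0 (x : F) : x = - x -> x = 0.
Proof.
move=> h; have : x * 2%:R == 0 by rewrite mulr_natr mulr2n {2}h addrN.
by rewrite mulf_eq0 (negbTE two_neq0) orbF => /eqP.
Qed.

Lemma sign_eq1 k : (-1) ^+ k = 1 :> F -> ~~ odd k.
Proof.
rewrite -signr_odd; case: (odd k) => //= h.
by move/eqP: (eq_oppr0 (esym h)); rewrite oner_eq0.
Qed.

Lemma bar_fixed_grades (x : mv) : bar x = x ->
  in_grades (fun k => (k %% 4 == 0)%N || (k %% 4 == 3)%N) x.
Proof.
move=> hx A hA; rewrite -even_bar_sign; apply/negP => hodd.
move/ffunP/(_ A): hx; rewrite barE /bar_sign -signr_odd hodd mulN1r => h.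
by move: hA; rewrite (eq_oppr0 (esym h)) eqxx.
Qed.

Lemma norm_grades (T : mv) :
  in_grades (fun k => (k %% 4 == 0)%N || (k %% 4 == 3)%N) (mul (bar T) T).
Proof. exact/bar_fixed_grades/bar_normE. Qed.

Definition central_support (x : mv) : Prop :=
  forall A, x A != 0 -> A = set0 \/ (A = setT /\ odd n).

Lemma central_support_center (x : mv) : central_support x -> in_center eta x.
Proof.
move=> hx y; apply/ffunP => C; rewrite !mulE.
rewrite [RHS](reindex_inj (@symdiffr_inj C)).
apply: eq_bigr => A _ /=; rewrite symdiffKr.
have [->|hA] := eqVneq (x A) 0; first by rewrite !(mul0r, mulr0).
rewrite (coef_swap A (symdiff A C)).
have -> : (-1) ^+ (#|A| * #|symdiff A C| + #|A :&: symdiff A C|) = 1 :> F.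
  case: (hx A hA) => [->|[-> odd_n]].
    by rewrite cards0 mul0n set0I cards0 expr0.
  by rewrite setTI cardsT card_ord -signr_odd oddD oddM odd_n addbb.
by rewrite mul1r [x A * _]mulrC.
Qed.

Hypothesis eta_neq0 : forall i, eta i != 0.

Lemma coef_neq0 A B : coef A B != 0.
Proof.
rewrite coefE mulf_neq0 //; apply/prodf_neq0 => ? _.
  by rewrite signr_eq0.
by rewrite expf_neq0.
Qed.

(* Comparing x e_i with e_i x on the blade A symdiff {i}: a central x with
   x_A <> 0 has #|A| + [i in A] even for every generator i. *)
Lemma center_parity (x : mv) : in_center eta x ->
  forall A, x A != 0 -> forall i, ~~ odd (#|A| + (i \in A)).
Proof.
move=> hc A hA i.
pose ei : mv := [ffun B => (B == [set i])%:R].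
have := congr1 (fun f : mv => f (symdiff A [set i])) (hc ei); rewrite /= !mulE.
rewrite (bigD1 A) //= big1 ?addr0; last first.
  move=> A' hA'; rewrite ffunE.
  rewrite (_ : (symdiff A' (symdiff A [set i]) == [set i]) = false) ?mulr0 ?mul0r //.
  apply/negbTE; apply: contra hA' => /eqP h.
  by rewrite -(symdiffKr A' (symdiff A [set i])) h symdiffC symdiffKr.
rewrite (bigD1 [set i]) //= [X in _ = _ + X]big1 ?addr0; last first.
  by move=> B hB; rewrite ffunE (negbTE hB) !mul0r.
rewrite !ffunE symdiffK eqxx symdiffC symdiffKr mulr1 mul1r (coef_swap A [set i]) => h.
have sign1 : (-1) ^+ (#|A| * #|[set i]| + #|A :&: [set i]|) = 1 :> F.
  apply: (mulIf (coef_neq0 A [set i])); apply: (mulfI hA).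
  by rewrite mul1r h mulrCA.
move: (sign_eq1 sign1); rewrite cards1 muln1.
case: (boolP (i \in A)) => hi.
  by rewrite (setIidPr _) ?cards1 // sub1set.
rewrite (_ : A :&: [set i] = set0) ?cards0 //; apply/setP => j.
by rewrite !inE; case: (eqVneq j i) => [->|]; rewrite ?(negbTE hi) ?andbF.
Qed.

Lemma center_central_support (x : mv) : in_center eta x -> central_support x.
Proof.
move=> hc A hA; have parity := center_parity hc hA.
case: (set_0Vmem A) => [->|[i hi]]; first by left.
have odd_A : odd #|A| by move: (parity i); rewrite hi addn1 /= negbK.
have AT : A = setT.
  apply/setP => j; rewrite inE; apply/negPn/negP => hj.
  by move: (parity j); rewrite (negbTE hj) addn0 odd_A.
by right; split => //; move: odd_A; rewrite AT cardsT card_ord.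
Qed.

Lemma card_full (A : {set 'I_n}) : #|A| = n -> A = setT.
Proof. by move=> hA; apply/eqP; rewrite eqEcard subsetT cardsT card_ord hA /=. Qed.

Lemma center_grades (x : mv) :
  in_grades (fun k => (k %% 4 == 0)%N || (k %% 4 == 3)%N) x ->
  in_center eta x <->
  in_grades (fun k => (k == 0%N) || (k == n) && (n %% 4 == 3)%N) x.
Proof.
move=> gx; split => [/center_central_support hx A hA|hx].
  case: (hx A hA) => [->|[AT odd_n]]; first by rewrite cards0.
  move: (gx A hA); rewrite AT cardsT card_ord eqxx /=.
  case/orP => [/eqP n0|->]; last by rewrite orbT.
  by move: odd_n; rewrite (divn_eq n 4) n0 addn0 oddM andbF.
apply: central_support_center => A hA; case/orP: (hx A hA) => [/eqP|/andP[/eqP An n3]].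
  by move/cards0_eq; left.
by right; split; [apply: card_full | rewrite (divn_eq n 4) (eqP n3) oddD oddM andbF].
Qed.

(* The theorem for any field of characteristic <> 2 and any nondegenerate
   diagonal metric: the grade claim, the description of B, and B = C^x for
   n <= 3 (where grades 0, 3 mod 4 below n are only 0, and n itself if n = 3). *)
Lemma clifford_conclusionsP : clifford_conclusions eta.
Proof.
have central (T : mv) := center_grades (@norm_grades T).
split; [|split; [|split]] => [T|n3 T|n3 T|n_le3 T]; first exact: norm_grades.
- rewrite /in_B central (negbTE n3); split => -[uT [gX uX]]; do !split => //.
    by move=> A /gX; rewrite andbF orbF.
  by move=> A /gX ->.
- rewrite /in_B central n3; split => -[uT [gX uX]]; do !split => //.
    by move=> A /gX; rewrite andbT.
  by move=> A /gX; rewrite andbT.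
- split => [[]//|uT]; do !split => //; last exact: unit_norm.
  apply/central => A hA; move: (norm_grades hA).
  have : (#|A| <= n)%N by rewrite -[X in (_ <= X)%N]card_ord max_card.
  lia.
Qed.

End CharNot2.
End CliffordAlgebra.

Theorem mainTheorem7 (n : nat) (hn : (2 <= n)%N) :
  (forall (R : realType) (p q : nat), (p + q)%N = n ->
     @clifford_conclusions R n (@real_sig R n p))
  /\
  (forall (R : realType),
     @clifford_conclusions R[i] n (fun _ : 'I_n => (1 : R[i]))).
Proof.
split => [R p q _ | R]; apply: clifford_conclusionsP; rewrite ?pnatr_eq0 // => i.
  by rewrite /real_sig; case: ifP; rewrite ?oppr_eq0 oner_eq0.
by rewrite oner_eq0.
Qed.
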